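(* Let $R$ be a commutative unital ring and $E$ an $R$-module. Then $\mathrm{Supp}_R(E)$ is Zariski closed in $\mathrm{Spec}(R)$ if and only if $\mathrm{Supp}_R(E)$ is pro-constructible. Moreover $\mathrm{Supp}_R(E)$ is Zariski closed in each of the following cases: (1) $\mathrm{Supp}_R(E)$ is finite; (2) $\mathrm{Ass}_R(E)$ is compact in the flat topology, for example if $\mathrm{Ass}_R(E)$ is pro-constructible, or finite, or closed; (3) $E$ has finite length; (4) $E$ is almost finitely generated over $R$; in this case $\mathrm V(\mathcal O_R(E))=\mathrm{Supp}_R(E)=\mathrm V(0:_RE)$ and $\mathcal O_R(E)=\sqrt{0:_RE}$.
   Context: $\mathrm{Supp}_R(E)=\{P\in\mathrm{Spec}(R)\mid E_P\neq0\}$; $\mathrm V(I)=\{P\mid I\subseteq P\}$. A subset of $\mathrm{Spec}(R)$ is pro-constructible if it is the image of $\mathrm{Spec}(T)\to\mathrm{Spec}(R)$ for some ring morphism $R\to T$. $\mathrm{Ass}_R(E)$ is the set of primes minimal among primes containing $0:_Rx$ for some $x\in E$. The flat topology on $\mathrm{Spec}(R)$ has as closed sets the images of spectra of flat $R$-algebras; the sets $\mathrm V(I)$ with $I$ finitely generated form a basis of its open sets; compactness does not require Hausdorffness. $E$ is almost finitely generated (afg) over $R$ if there is a ring morphism $R\to S$ such that $E$ is a finitely generated $S$-module whose induced $R$-module structure is the original one. $E_a$ is the localization at $\{a^n\}$ and $\mathcal O_R(E)=\{a\in R\mid E_a=0\}$. *)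

From HB Require Import structures.
From Stdlib Require List.
From mathcomp Require Import all_boot all_order all_algebra.
Set Implicit Arguments. Unset Strict Implicit. Unset Printing Implicit Defensive.
Import GRing.Theory.
Local Open Scope ring_scope.

Definition prime_ideal (R : comPzRingType) (P : R -> Prop) : Prop :=
  [/\ P 0, (forall x y, P x -> P y -> P (x + y)),
      (forall r x, P x -> P (r * x)), ~ P 1
    & (forall x y, P (x * y) -> P x \/ P y)].

Section CommAlg.
Variable R : comPzRingType.

Definition Spec : Type := {P : R -> Prop | @prime_ideal R P}.

Definition Vset (A : R -> Prop) : Spec -> Prop :=
  fun P => forall a, A a -> proj1_sig P a.

Definition zariski_closed (X : Spec -> Prop) : Prop :=
  exists A : R -> Prop, forall P, X P <-> Vset A P.

(* pro-constructible: image of Spec T -> Spec R for a ring morphism R -> T *)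
Definition pro_constructible (X : Spec -> Prop) : Prop :=
  exists (T : comPzRingType) (f : {rmorphism R -> T}),
    forall P : Spec, X P <->
      exists Q : {Q : T -> Prop | @prime_ideal T Q},
        forall r, proj1_sig P r <-> proj1_sig Q (f r).

Definition finite_set (X : Spec -> Prop) : Prop :=
  exists l : list Spec, forall P, X P -> List.In P l.

(* flat topology: open sets are unions of the basic sets V(I), I finitely
   generated (I generated by the finite list l, so V(I) = V(l)) *)
Definition Vlist (l : seq R) : Spec -> Prop := Vset (fun a => a \in l).

Definition flat_open (U : Spec -> Prop) : Prop :=
  forall P, U P -> exists l : seq R, Vlist l P /\ forall Q, Vlist l Q -> U Q.

Definition flat_closed (X : Spec -> Prop) : Prop :=
  flat_open (fun P => ~ X P).

Definition flat_compact (X : Spec -> Prop) : Prop :=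
  forall (I : Type) (U : I -> Spec -> Prop),
    (forall i, flat_open (U i)) ->
    (forall P, X P -> exists i, U i P) ->
    exists l : list I, forall P, X P -> exists i, List.In i l /\ U i P.

Variable E : lmodType R.

(* E_P = 0 : every fraction x/s vanishes, i.e. t *: x = 0 for some t notin P *)
Definition loc_prime_zero (P : Spec) : Prop :=
  forall x : E, exists t : R, ~ proj1_sig P t /\ t *: x = 0.

Definition Supp : Spec -> Prop := fun P => ~ loc_prime_zero P.

Definition ann_elt (x : E) : R -> Prop := fun r => r *: x = 0.
Definition ann_mod : R -> Prop := fun r => forall x : E, r *: x = 0.

Definition Ass : Spec -> Prop := fun P =>
  exists x : E,
    (forall r, ann_elt x r -> proj1_sig P r) /\
    (forall Q : Spec, (forall r, ann_elt x r -> proj1_sig Q r) ->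
        (forall r, proj1_sig Q r -> proj1_sig P r) ->
        (forall r, proj1_sig P r -> proj1_sig Q r)).

Definition loc_elt_zero (a : R) : Prop :=
  forall x : E, exists n : nat, a ^+ n *: x = 0.

Definition OR : R -> Prop := fun a => loc_elt_zero a.

Definition radical (I : R -> Prop) : R -> Prop :=
  fun a => exists n : nat, I (a ^+ n).

Definition submodule (M : E -> Prop) : Prop :=
  [/\ M 0, (forall x y, M x -> M y -> M (x + y))
    & (forall r x, M x -> M (r *: x))].

Definition finite_length : Prop :=
  exists n : nat, forall (k : nat) (M : nat -> E -> Prop),
    (forall i, submodule (M i)) ->
    (forall i, (i < k)%N ->
       (forall x, M i x -> M i.+1 x) /\ (exists x, M i.+1 x /\ ~ M i x)) ->
    (k <= n)%N.

Definition afg : Prop :=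
  exists (S : comPzRingType) (f : {rmorphism R -> S}) (act : S -> E -> E),
    [/\ (forall s x y, act s (x + y) = act s x + act s y),
        (forall s t x, act (s + t) x = act s x + act t x),
        (forall s t x, act (s * t) x = act s (act t x)),
        (forall x, act 1 x = x)
      & (forall r x, act (f r) x = r *: x)] /\
    exists gens : seq E, forall x : E, exists c : nat -> S,
      x = \sum_(i < size gens) act (c i) (nth 0 gens i).

End CommAlg.

(* Supp(E) is stable under specialization, and by Zorn's lemma every prime of
   Supp(E) contains a minimal prime over some 0 :_R x, i.e. a point of Ass(E);
   so Supp(E) is the set of specializations of Supp(E), and also of Ass(E).
   The specializations of a set X of primes form the closed set V(\bigcap X)
   as soon as every prime P containing \bigcap X contains a point of X.  This
   holds when X is the image of Spec T (take a prime of T avoiding the image of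
   R \ P), and when X is compact in the flat topology (otherwise finitely many
   a_i outside P, each in some point of X, cover X, and their product lies in
   \bigcap X but not in P).  Finite sets are flat-compact, and so are
   flat-closed sets because Spec R is: extend a family of sets Spec R \ V(l)
   with the finite intersection property to a maximal one; each of its l then
   has an element a with Spec R \ V(a) in the family, and a prime avoiding the
   products of these a lies in every member.  Conversely V(J) is the image of
   Spec(R/J).  When E is almost finitely generated, the annihilator of E is
   that of finitely many elements, whence Supp(E) = V(0 :_R E) and
   O_R(E) = sqrt(0 :_R E); modules of finite length are finitely generated. *)

From HB Require Import structures.
From Stdlib Require List.
From mathcomp Require Import all_boot all_order all_algebra.
From mathcomp Require Import boolp classical_sets.
From mathcomp Require Import ring generic_quotient ring_quotient.
Set Implicit Arguments. Unset Strict Implicit. Unset Printing Implicit Defensive.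
Import GRing.Theory.
Local Open Scope ring_scope.
Local Open Scope classical_set_scope.

Lemma Zorn_above T (P : set (set T)) (A0 : set T) :
  P A0 ->
  (forall F, F `<=` P -> total_on F subset -> F !=set0 ->
     P (\bigcup_(X in F) X)) ->
  exists A, [/\ A0 `<=` A, P A & forall B, P B -> A `<=` B -> B `<=` A].
Proof.
move=> PA0 Pchain.
(* Zorn_bigcup also covers the empty chain, whose union need not satisfy P. *)
pose P' : set (set T) := fun X => P (X `|` A0).
have [A [P'A Amax]] : exists A, P' A /\ forall B, A `<` B -> ~ P' B.
  apply: Zorn_bigcup => F FP' Ftot.
  have [[X FX]|/nonemptyPn F0] := pselect (F !=set0); last first.
    by rewrite /P' F0 bigcup_set0 set0U.
  rewrite /P'.
  have -> : \bigcup_(X in F) X `|` A0 = \bigcup_(Y in [set X `|` A0 | X in F]) Y.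
    apply/seteqP; split=> t.
      case=> [[Y FY Yt]|A0t].
        by exists (Y `|` A0); [exists Y|left].
      by exists (X `|` A0); [exists X|right].
    by move=> [_ [Y FY <-] [Yt|A0t]]; [left; exists Y|right].
  apply: Pchain.
  - by move=> _ [Y FY <-]; exact: FP'.
  - move=> _ _ [Y1 FY1 <-] [Y2 FY2 <-].
    by case: (Ftot _ _ FY1 FY2) => sub; [left|right]; exact: setSU.
  - by exists (X `|` A0), X.
exists (A `|` A0); split=> //.
move=> B PB AB; have A0B : A0 `<=` B := subset_trans (@subsetUr _ _ _) AB.
apply: contrapT => nBA; apply: (Amax B); last by rewrite /P' (setUidPl _ _).2.
split; first exact: subset_trans (@subsetUl _ _ _) AB.
by move=> BA; apply: nBA => t /BA; left.
Qed.

Lemma bigcup_chain_list T (F : set (set T)) (s : list T) :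
  total_on F subset -> F !=set0 ->
  (forall x, List.In x s -> (\bigcup_(X in F) X) x) ->
  exists2 X, F X & forall x, List.In x s -> X x.
Proof.
move=> Ftot [X0 FX0]; elim: s => [|y s IH] sF; first by exists X0.
have [X FX sX] := IH (fun x xs => sF x (or_intror xs)).
have [Y FY Yy] := sF y (or_introl erefl).
have [XY|YX] := Ftot _ _ FX FY.
  by exists Y => // x [<-|/sX/XY].
by exists X => // x [<-|/sX]; [exact: YX|].
Qed.

Lemma list_choice_or A I (R0 : A -> Prop) (Q : A -> I -> Prop) (s : list A) :
  (forall a, List.In a s -> R0 a \/ exists i, Q a i) ->
  exists li : list I, forall a, List.In a s -> R0 a \/ exists2 i, List.In i li & Q a i.
Proof.
elim: s => [|a s IH] sQ; first by exists nil.
have [li liQ] := IH (fun b bs => sQ b (or_intror bs)).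
case: (sQ a (or_introl erefl)) => [R0a|[i Qai]].
  by exists li => b [<-|/liQ]; [left|].
exists (i :: li) => b [<-|/liQ [R0b|[j jli Qbj]]].
- by right; exists i => //; left.
- by left.
- by right; exists j => //; right.
Qed.

Definition ideal (T : comPzRingType) (J : set T) :=
  [/\ J 0, forall x y, J x -> J y -> J (x + y) & forall r x, J x -> J (r * x)].

Section PrimeIdeal.
Variables (T : comPzRingType) (P : set T).
Hypothesis primeP : prime_ideal P.

Lemma prime_ideal0 : P 0. Proof. by case: primeP. Qed.

Lemma prime_idealD x y : P x -> P y -> P (x + y).
Proof. by case: primeP => _ + _ _ _; apply. Qed.

Lemma prime_idealMl r x : P x -> P (r * x).
Proof. by case: primeP => _ _ + _ _; apply. Qed.

Lemma prime_idealMr r x : P x -> P (x * r).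
Proof. by rewrite mulrC; apply: prime_idealMl. Qed.

Lemma prime_ideal_not1 : ~ P 1. Proof. by case: primeP. Qed.

Lemma prime_idealM x y : P (x * y) -> P x \/ P y.
Proof. by case: primeP => _ _ _ _; apply. Qed.

Lemma prime_idealNM x y : ~ P x -> ~ P y -> ~ P (x * y).
Proof. by move=> nx ny /prime_idealM []. Qed.

Lemma prime_idealX a n : P (a ^+ n) -> P a.
Proof.
elim: n => [|n IH]; first by rewrite expr0 => /prime_ideal_not1.
by rewrite exprS => /prime_idealM [] // /IH.
Qed.

Lemma prime_ideal_prodN I (s : list I) (F : I -> T) :
  (forall i, List.In i s -> ~ P (F i)) -> ~ P (\prod_(i <- s) F i).
Proof.
elim: s => [|i s IH] sF; first by rewrite big_nil; exact: prime_ideal_not1.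
rewrite big_cons; apply: prime_idealNM; first exact: sF (or_introl erefl).
by apply: IH => j js; apply: sF (or_intror js).
Qed.

Lemma prime_ideal_prod I (s : list I) (F : I -> T) i :
  List.In i s -> P (F i) -> P (\prod_(j <- s) F j).
Proof.
elim: s => [|j s IH] //= [<-|si] PFi; rewrite big_cons.
  exact: prime_idealMr.
by apply: prime_idealMl; apply: IH.
Qed.

End PrimeIdeal.

Lemma prime_ideal_preim (T U : comPzRingType) (f : {rmorphism T -> U}) (Q : set U) :
  prime_ideal Q -> prime_ideal (fun t => Q (f t)).
Proof.
move=> pQ; split.
- by rewrite rmorph0; exact: prime_ideal0.
- by move=> x y Qx Qy; rewrite rmorphD; exact: prime_idealD.
- by move=> r x Qx; rewrite rmorphM; exact: prime_idealMl.
- by rewrite rmorph1; exact: prime_ideal_not1.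
- by move=> x y; rewrite rmorphM => /(prime_idealM pQ).
Qed.

Lemma prime_ideal_surj_image (T U : comPzRingType) (f : {rmorphism T -> U})
    (P : set T) (Q : set U) :
  (forall u, exists t, u = f t) -> (forall t, Q (f t) <-> P t) ->
  prime_ideal P -> prime_ideal Q.
Proof.
move=> fsurj QP pP; split.
- by rewrite -(rmorph0 f); apply/QP; exact: prime_ideal0.
- move=> u v; have [x ->] := fsurj u; have [y ->] := fsurj v.
  by rewrite -rmorphD => /QP Px /QP Py; apply/QP; exact: prime_idealD.
- move=> u v; have [x ->] := fsurj u; have [y ->] := fsurj v.
  by rewrite -rmorphM => /QP Py; apply/QP; exact: prime_idealMl.
- by rewrite -(rmorph1 f) => /QP; exact: prime_ideal_not1.
- move=> u v; have [x ->] := fsurj u; have [y ->] := fsurj v.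
  by rewrite -rmorphM => /QP /(prime_idealM pP) [] /QP; [left|right].
Qed.

Lemma ideal_bigcup_chain (T : comPzRingType) (F : set (set T)) :
  F `<=` @ideal T -> total_on F subset -> F !=set0 -> ideal (\bigcup_(J in F) J).
Proof.
move=> Fid Ftot [J0 FJ0]; split.
- by exists J0 => //; case: (Fid _ FJ0).
- move=> x y xF yF.
  have [J FJ xyJ] : exists2 J, F J & forall z, List.In z [:: x; y] -> J z.
    by apply: bigcup_chain_list => // [|z [<-|[<-|[]]]] //; exists J0.
  by exists J => //; case: (Fid _ FJ) => _ + _; apply; apply: xyJ; [left|right; left].
- by move=> r x [J FJ Jx]; exists J => //; case: (Fid _ FJ) => _ _; apply.
Qed.

Section PrimeAvoidance.
Variables (T : comPzRingType) (S : set T).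
Hypotheses (S1 : S 1) (SM : forall x y, S x -> S y -> S (x * y)).

Lemma maximal_avoiding_prime (M : set T) :
  ideal M -> (forall s, S s -> ~ M s) ->
  (forall J, ideal J -> (forall s, S s -> ~ J s) -> M `<=` J -> J `<=` M) ->
  prime_ideal M.
Proof.
move=> [M0 MD MM] MS Mmax.
have meetS x : ~ M x -> exists m r, M m /\ S (m + r * x).
  move=> nMx; apply: contrapT => nS; apply: nMx.
  apply: (Mmax (fun t => exists m r, M m /\ t = m + r * x)).
  - split.
    + by exists 0, 0; rewrite mul0r addr0.
    + move=> _ _ [m1 [r1 [Mm1 ->]]] [m2 [r2 [Mm2 ->]]].
      by exists (m1 + m2), (r1 + r2); split; [exact: MD|ring].
    + move=> r _ [m [r' [Mm ->]]].
      by exists (r * m), (r * r'); split; [exact: MM|ring].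
  - by move=> s Ss [m [r [Mm se]]]; apply: nS; exists m, r; rewrite -se.
  - by move=> t Mt; exists t, 0; rewrite mul0r addr0.
  - by exists 0, 1; rewrite add0r mul1r.
split=> //; first by apply: MS.
move=> x y Mxy; apply: contrapT => /not_orP [/meetS [m1 [r1 [Mm1 S1']]]].
move=> /meetS [m2 [r2 [Mm2 S2']]]; apply: MS (SM S1' S2') _.
have -> : (m1 + r1 * x) * (m2 + r2 * y) =
    m1 * m2 + (r1 * x) * m2 + (r2 * y) * m1 + (r1 * r2) * (x * y) by ring.
by apply: MD _ _ (MD _ _ (MD _ _ (MM _ _ Mm2) (MM _ _ Mm2)) (MM _ _ Mm1)) (MM _ _ Mxy).
Qed.

Lemma prime_avoid : ~ S 0 -> exists2 Q, prime_ideal Q & forall s, S s -> ~ Q s.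
Proof.
move=> nS0.
have [|F FP Ftot Fne|M [_ [idM MS] Mmax]] :=
  Zorn_above (P := fun J => ideal J /\ forall s, S s -> ~ J s) (A0 := [set 0]).
- split; last by move=> s Ss s0; apply: nS0; rewrite -s0.
  by split=> [|_ _ -> ->|r _ ->]; rewrite ?addr0 ?mulr0.
- split; first by apply: ideal_bigcup_chain => // J /FP [].
  by move=> s Ss [J /FP [_ JS] Js]; exact: JS Ss Js.
exists M => //; apply: maximal_avoiding_prime => // J idJ JS MJ.
exact: Mmax.
Qed.

End PrimeAvoidance.

Lemma Zorn_below T (P : set (set T)) (A0 : set T) :
  P A0 ->
  (forall F, F `<=` P -> total_on F subset -> F !=set0 ->
     P (\bigcap_(X in F) X)) ->
  exists A, [/\ A `<=` A0, P A & forall B, P B -> B `<=` A -> A `<=` B].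
Proof.
move=> PA0 Pchain.
have [|F FP Ftot Fne|A [A0A PA Amax]] := Zorn_above (P := P \o setC) (A0 := ~` A0).
- by rewrite /= setCK.
- rewrite /= setC_bigcup -(bigcap_image _ setC id); apply: Pchain.
  + by move=> _ [X FX <-]; exact: FP.
  + move=> _ _ [X FX <-] [Y FY <-].
    by case: (Ftot _ _ FX FY) => sub; [right|left]; exact: subsetC.
  + exact: image_nonempty.
exists (~` A); split=> //; first exact: subsetCl.
move=> B PB BA; apply: subsetCl; apply: Amax; first by rewrite /= setCK.
exact: subsetCr.
Qed.

Section MinimalPrimes.
Variable R : comPzRingType.

Lemma prime_bigcap_chain (F : set (set R)) :
  F `<=` @prime_ideal R -> total_on F subset -> F !=set0 ->
  prime_ideal (\bigcap_(Q in F) Q).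
Proof.
move=> Fp Ftot [Q0 FQ0]; split.
- by move=> Q /Fp /prime_ideal0.
- by move=> x y Fx Fy Q FQ; apply: (prime_idealD (Fp _ FQ)); [apply: Fx|apply: Fy].
- by move=> r x Fx Q FQ; apply: (prime_idealMl (Fp _ FQ)); apply: Fx.
- by move=> /(_ Q0 FQ0); apply: prime_ideal_not1 (Fp _ FQ0).
- move=> x y Fxy; apply: contrapT => /not_orP [/existsNP [Q1 /not_implyP [FQ1 nx]]].
  move=> /existsNP [Q2 /not_implyP [FQ2 ny]].
  have [Q12|Q21] := Ftot _ _ FQ1 FQ2.
    by case: (prime_idealM (Fp _ FQ1) (Fxy _ FQ1)) => // /Q12.
  by case: (prime_idealM (Fp _ FQ2) (Fxy _ FQ2)) => // /Q21.
Qed.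

Lemma minimal_prime_below (I : set R) (P : Spec R) : I `<=` sval P ->
  exists Q : Spec R, [/\ I `<=` sval Q, sval Q `<=` sval P &
    forall Q' : Spec R, I `<=` sval Q' -> sval Q' `<=` sval Q -> sval Q `<=` sval Q'].
Proof.
move=> IP.
have [|F Fp Ftot Fne|Q [QP [pQ IQ] Qmin]] :=
  Zorn_below (P := fun Q => prime_ideal Q /\ I `<=` Q) (A0 := sval P).
- by split; [exact: proj2_sig P|].
- split; first by apply: prime_bigcap_chain => // Q /Fp [].
  by move=> r Ir Q /Fp [_]; apply.
exists (exist _ _ pQ); split=> // Q' IQ' Q'Q.
by apply: Qmin => //; split; [exact: proj2_sig Q'|].
Qed.

End MinimalPrimes.

Section FlatTopology.
Variable R : comPzRingType.
Implicit Types (X : set (Spec R)) (P Q : Spec R).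

Lemma Vlist1 (a : R) Q : Vlist [:: a] Q <-> sval Q a.
Proof. by split=> [|Qa b]; [apply; rewrite mem_head|rewrite inE => /eqP ->]. Qed.

Lemma flat_open_Vlist (l : seq R) : flat_open (Vlist l).
Proof. by move=> P VP; exists l. Qed.

(* [C] has the finite intersection property as a family of the flat-closed
   sets [Spec R \ V(l)]. *)
Definition fip (C : set (seq R)) := forall L : list (seq R),
  (forall l, List.In l L -> C l) -> exists P, forall l, List.In l L -> ~ Vlist l P.

Lemma fip_bigcup_chain (F : set (set (seq R))) :
  F `<=` fip -> total_on F subset -> F !=set0 -> fip (\bigcup_(C in F) C).
Proof.
move=> Ffip Ftot Fne L LF.
have [C FC LC] := bigcup_chain_list Ftot Fne LF.
exact: Ffip FC L LC.
Qed.

Section MaximalFip.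
Variable M : set (seq R).
Hypotheses (fipM : fip M) (Mmax : forall C, fip C -> M `<=` C -> C `<=` M).

Lemma fip_maximal_notin l : ~ M l ->
  exists2 L, (forall l', List.In l' L -> M l') &
    forall P, (forall l', List.In l' L -> ~ Vlist l' P) -> Vlist l P.
Proof.
move=> nMl; apply: contrapT => nL; apply/nMl/(Mmax (C := M `|` [set l])); last by right.
  move=> L LMl; pose L' := List.filter (fun l' => l' != l) L.
  have L'M l' : List.In l' L' -> M l'.
    by move=> /List.filter_In [/LMl [//|->]]; rewrite eqxx.
  have [P [outL' nVl]] :
      exists P, (forall l', List.In l' L' -> ~ Vlist l' P) /\ ~ Vlist l P.
    apply: contrapT => nP; apply: nL; exists L' => // P outL'.
    by apply: contrapT => nVl; apply: nP; exists P.
  exists P => l' l'L; have [->//|nl'l] := eqVneq l' l.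
  by apply: outL'; apply/List.filter_In.
by move=> l' Ml'; left.
Qed.

Lemma fip_maximal_cat l1 l2 : M (l1 ++ l2) -> M l1 \/ M l2.
Proof.
move=> M12; apply: contrapT => /not_orP [/fip_maximal_notin [L1 L1M V1]].
move=> /fip_maximal_notin [L2 L2M V2].
have [P outP] : exists P, forall l, List.In l ((l1 ++ l2) :: L1 ++ L2) -> ~ Vlist l P.
  by apply: fipM => l [<-|/List.in_app_iff [/L1M|/L2M]].
apply: (outP _ (or_introl erefl)) => a; rewrite mem_cat => /orP [].
  by apply: V1 => l' l'L1; apply: outP; right; apply/List.in_app_iff; left.
by apply: V2 => l' l'L2; apply: outP; right; apply/List.in_app_iff; right.
Qed.

Lemma fip_maximal_singleton l : M l -> exists2 a, a \in l & M [:: a].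
Proof.
elim: l => [|a l IH] Ml.
  have [P /(_ _ (or_introl erefl))] :
      exists P, forall l, List.In l [:: [::]] -> ~ Vlist l P.
    by apply: fipM => _ [<-|[]].
  by move=> nV; exfalso; apply: nV => a; rewrite in_nil.
have [Ma|/IH [b bl Mb]] := fip_maximal_cat (l1 := [:: a]) Ml.
  by exists a; rewrite ?mem_head.
by exists b; rewrite // inE bl orbT.
Qed.

Lemma fip_maximal_avoid : exists P, forall l, M l -> ~ Vlist l P.
Proof.
pose S (s : R) := exists2 G : list R,
  (forall g, List.In g G -> M [:: g]) & s = \prod_(g <- G) g.
have S1 : S 1 by exists nil; rewrite ?big_nil.
have SM x y : S x -> S y -> S (x * y).
  move=> [G1 G1M ->] [G2 G2M ->]; exists (G1 ++ G2); last by rewrite big_cat.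
  by move=> g /List.in_app_iff [/G1M|/G2M].
have nS0 : ~ S 0.
  move=> [G GM G0].
  have [P outP] :
      exists P, forall l, List.In l (List.map (fun g => [:: g]) G) -> ~ Vlist l P.
    by apply: fipM => _ /List.in_map_iff [g [<- /GM]].
  apply: (prime_ideal_prodN (proj2_sig P) (s := G) (F := id)).
    move=> g Gg Pg; apply: (outP [:: g]); last exact/Vlist1.
    by apply/List.in_map_iff; exists g.
  by rewrite -G0; exact: prime_ideal0 (proj2_sig P).
have [Q pQ QS] := prime_avoid S1 SM nS0.
exists (exist _ Q pQ) => l /fip_maximal_singleton [a al Ma] /(_ a al).
by apply: QS; exists [:: a]; [move=> g [<-|[]]|rewrite big_seq1].
Qed.

End MaximalFip.

Lemma fip_avoid C : fip C -> exists P, forall l, C l -> ~ Vlist l P.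
Proof.
move=> fipC.
have [|M [CM fipM Mmax]] := Zorn_above fipC; first exact: fip_bigcup_chain.
have [P outP] := fip_maximal_avoid fipM Mmax.
by exists P => l /CM; apply: outP.
Qed.

Lemma flat_closed_compact X : flat_closed X -> flat_compact X.
Proof.
move=> Xc I U Uo Xcov; apply: contrapT => nfin.
(* A prime outside every V(l) in C would be a point of X covered by no U i. *)
pose C l := (forall Q, Vlist l Q -> ~ X Q) \/ exists i, forall Q, Vlist l Q -> U i Q.
have fipC : fip C.
  move=> L LC; have [li Lli] := list_choice_or LC.
  have [P [XP nU]] : exists P, X P /\ forall i, List.In i li -> ~ U i P.
    apply: contrapT => nP; apply: nfin; exists li => P XP.
    by apply: contrapT => nU; apply: nP; exists P; split=> // i ili Ui; apply: nU; exists i.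
  by exists P => l /Lli [nX|[i ili Ui]] Vl; [exact: nX Vl XP|exact: nU ili (Ui _ Vl)].
have [P outP] := fip_avoid fipC.
have XP : X P.
  by apply: contrapT => /Xc [l [Vl Vl_nX]]; exact: outP l (or_introl Vl_nX) Vl.
have [i Ui] := Xcov P XP; have [l [Vl Vl_Ui]] := Uo i P Ui.
by apply: (outP l) => //; right; exists i.
Qed.

Lemma finite_set_flat_compact X : finite_set X -> flat_compact X.
Proof.
move=> [l Xl] I U Uo Xcov.
have [li lli] : exists li : list I,
    forall P, List.In P l -> ~ X P \/ exists2 i, List.In i li & U i P.
  by apply: list_choice_or => P _; have [/Xcov|] := pselect (X P); [right|left].
exists li => P XP; have [//|[i ili Ui]] := lli P (Xl P XP).
by exists i.
Qed.

End FlatTopology.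

Section Specialization.
Variable R : comPzRingType.
Implicit Types (X : set (Spec R)) (P Q : Spec R).

Definition specializations X : set (Spec R) :=
  fun P => exists2 Q, X Q & sval Q `<=` sval P.

Definition closure_in_specializations X :=
  Vset (\bigcap_(Q in X) sval Q) `<=` specializations X.

Lemma zariski_closed_specializations X :
  closure_in_specializations X -> zariski_closed (specializations X).
Proof.
move=> Xcl; exists (\bigcap_(Q in X) sval Q) => P; split; last exact: Xcl.
by move=> [Q XQ QP] a /(_ Q XQ) /QP.
Qed.

Lemma flat_compact_closure X : flat_compact X -> closure_in_specializations X.
Proof.
move=> Xc P Pcl; apply: contrapT => nspec.
pose I := {a : R | ~ sval P a}.
have Xcov Q : X Q -> exists i : I, Vlist [:: sval i] Q.
  move=> XQ; have [a [Qa nPa]] : exists a, sval Q a /\ ~ sval P a.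
    apply: contrapT => nQP; apply: nspec; exists Q => // a Qa.
    by apply: contrapT => nPa; apply: nQP; exists a.
  by exists (exist _ a nPa); apply/Vlist1.
have [li Xli] := Xc I (fun i => Vlist [:: sval i]) (fun i => @flat_open_Vlist R _) Xcov.
apply: (prime_ideal_prodN (proj2_sig P) (s := li) (F := sval)) => [i _|].
  exact: proj2_sig i.
apply: Pcl => Q XQ; have [i [ili /Vlist1 Qi]] := Xli Q XQ.
exact: (prime_ideal_prod (proj2_sig Q) ili Qi).
Qed.

Lemma pro_constructible_closure X : pro_constructible X -> closure_in_specializations X.
Proof.
move=> [T [f Xf]] P Pcl.
pose S t := exists2 s, ~ sval P s & t = f s.
have S1 : S 1 by exists 1; [exact: prime_ideal_not1 (proj2_sig P)|rewrite rmorph1].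
have SM x y : S x -> S y -> S (x * y).
  move=> [s nPs ->] [t nPt ->]; exists (s * t); last by rewrite rmorphM.
  exact: (prime_idealNM (proj2_sig P) nPs nPt).
have nS0 : ~ S 0.
  move=> [s nPs fs0]; apply/nPs/Pcl => Q /Xf [Q' Q'f]; apply/Q'f.
  by rewrite -fs0; exact: prime_ideal0 (proj2_sig Q').
have [M pM MS] := prime_avoid S1 SM nS0.
exists (exist _ _ (prime_ideal_preim f pM)); first by apply/Xf; exists (exist _ M pM).
by move=> r /= Mfr; apply: contrapT => nPr; apply: MS Mfr; exists r.
Qed.

Lemma Vset_radical (I : set R) P : Vset (radical I) P <-> Vset I P.
Proof.
split=> [VP a Ia|VP a [n Ian]]; last exact: (prime_idealX (proj2_sig P) (VP _ Ian)).
by apply: VP; exists 1%N; rewrite expr1.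
Qed.

End Specialization.

(* The quotient of ring_quotient.v needs a nontrivial ring and a proper ideal,
   whereas here [J] may be all of [R]. *)
Section QuotientRing.
Variables (R : comPzRingType) (J : set R).
Hypothesis idealJ : ideal J.
Local Open Scope quotient_scope.

Definition ideal_pred : {pred R} := fun x => `[< J x >].

Lemma ideal_pred_zmod_closed : zmod_closed ideal_pred.
Proof.
case: idealJ => J0 JD JM; split; first exact/asboolP.
move=> x y /asboolP Jx /asboolP Jy; apply/asboolP.
by apply: JD => //; rewrite -mulN1r; apply: JM.
Qed.

HB.instance Definition _ :=
  GRing.isZmodClosed.Build R ideal_pred ideal_pred_zmod_closed.

Definition quot_ring := Quotient.quot ideal_pred.
HB.instance Definition _ := Choice.on quot_ring.
HB.instance Definition _ := GRing.Zmodule.on quot_ring.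
HB.instance Definition _ := EqQuotient.on quot_ring.

Definition quot_one : quot_ring := lift_cst quot_ring 1.
Definition quot_mul := lift_op2 quot_ring *%R.
Canonical pi_quot_one_morph := PiConst quot_one.

Lemma ideal_predMl a u : u \in ideal_pred -> a * u \in ideal_pred.
Proof. by case: idealJ => _ _ JM /asboolP Ju; apply/asboolP; apply: JM. Qed.

Lemma pi_quot_mul : {morph \pi_quot_ring : x y / x * y >-> quot_mul x y}.
Proof.
move=> x y; unlock quot_mul; apply/eqP; rewrite piE Quotient.equivE.
rewrite -[_ * _](addrNK (x * repr (\pi_quot_ring y))) -mulrBr.
rewrite -addrA -mulrBl rpredD //.
  by rewrite ideal_predMl // Quotient.idealrDE opprK reprK.
by rewrite mulrC ideal_predMl // Quotient.idealrDE opprK reprK.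
Qed.
Canonical pi_quot_mul_morph := PiMorph2 pi_quot_mul.

Lemma quot_mulA : associative quot_mul.
Proof. by move=> x y z; rewrite -[x]reprK -[y]reprK -[z]reprK !piE mulrA. Qed.
Lemma quot_mulC : commutative quot_mul.
Proof. by move=> x y; rewrite -[x]reprK -[y]reprK !piE mulrC. Qed.
Lemma quot_mul1 : left_id quot_one quot_mul.
Proof. by move=> x; rewrite -[x]reprK !piE mul1r. Qed.
Lemma quot_mulDl : left_distributive quot_mul +%R.
Proof. by move=> x y z; rewrite -[x]reprK -[y]reprK -[z]reprK !piE mulrDl. Qed.

HB.instance Definition _ :=
  GRing.Zmodule_isComPzRing.Build quot_ring quot_mulA quot_mulC quot_mul1 quot_mulDl.

Definition quot_pi (x : R) : quot_ring := \pi_quot_ring x.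

Lemma quot_pi_zmod : zmod_morphism quot_pi.
Proof. by move=> x y; rewrite /quot_pi !piE. Qed.
HB.instance Definition _ := GRing.isZmodMorphism.Build R quot_ring quot_pi quot_pi_zmod.

Lemma quot_pi_monoid : monoid_morphism quot_pi.
Proof. by split=> [|x y]; rewrite /quot_pi !piE. Qed.
HB.instance Definition _ := GRing.isMonoidMorphism.Build R quot_ring quot_pi quot_pi_monoid.

Lemma quot_piP x y : quot_pi x = quot_pi y <-> J (x - y).
Proof.
rewrite /quot_pi; split; first by move=> /eqP; rewrite piE Quotient.equivE => /asboolP.
by move=> Jxy; apply/eqP; rewrite piE Quotient.equivE; apply/asboolP.
Qed.

Lemma quot_pi_surj (q : quot_ring) : exists x, q = quot_pi x.
Proof. by exists (repr q); rewrite /quot_pi reprK. Qed.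

Lemma Vset_ideal_pro_constructible : pro_constructible (Vset J).
Proof.
exists quot_ring, (quot_pi : {rmorphism R -> quot_ring}) => P; split; last first.
  move=> [[Q pQ] PQ] a Ja; apply/PQ => /=.
  have -> : quot_pi a = 0 by rewrite -(rmorph0 quot_pi); apply/quot_piP; rewrite subr0.
  exact: prime_ideal0 pQ.
move=> JP; pose Q (q : quot_ring) := sval P (repr q).
have QP x : Q (quot_pi x) <-> sval P x.
  have Pd : sval P (repr (quot_pi x) - x).
    by apply: JP; apply/quot_piP; rewrite /quot_pi reprK.
  split=> [Prx|Px].
    have -> : x = repr (quot_pi x) + (-1) * (repr (quot_pi x) - x) by ring.
    exact: (prime_idealD (proj2_sig P) Prx (prime_idealMl (proj2_sig P) _ Pd)).
  by rewrite /Q -[repr _](subrK x); exact: (prime_idealD (proj2_sig P) Pd Px).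
have pQ := prime_ideal_surj_image quot_pi_surj QP (proj2_sig P).
by exists (exist _ Q pQ) => r; split=> /QP.
Qed.

End QuotientRing.

Lemma zariski_closed_pro_constructible (R : comPzRingType) (X : set (Spec R)) :
  zariski_closed X -> pro_constructible X.
Proof.
move=> [A XA]; pose J := \bigcap_(P in Vset A) sval P.
have idealJ : ideal J.
  split=> [P _|x y Jx Jy P VP|r x Jx P VP]; first exact: prime_ideal0 (proj2_sig P).
    exact: (prime_idealD (proj2_sig P) (Jx P VP) (Jy P VP)).
  exact: (prime_idealMl (proj2_sig P) _ (Jx P VP)).
have XJ P : X P <-> Vset J P.
  split=> [/XA VP a /(_ P VP) //|JP]; apply/XA => a Aa.
  by apply: JP => Q; apply.
have [T [f Jf]] := Vset_ideal_pro_constructible idealJ.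
by exists T, f => P; split=> [/XJ /Jf|/Jf /XJ].
Qed.

Section Support.
Variables (R : comPzRingType) (E : lmodType R).
Implicit Types (P Q : Spec R).

Lemma SuppE P : Supp E P <-> exists x : E, ann_elt x `<=` sval P.
Proof.
split=> [nloc|[x xP] loc]; last by have [t [nPt tx]] := loc x; exact: nPt (xP _ tx).
apply: contrapT => nx; apply: nloc => x.
apply: contrapT => nt; apply: nx; exists x => r rx.
by apply: contrapT => nPr; apply: nt; exists r.
Qed.

Lemma Supp_specializations : Supp E = specializations (Supp E).
Proof.
apply/seteqP; split=> [P SP|P [Q /SuppE [x xQ] QP]]; first by exists P.
by apply/SuppE; exists x => r /xQ /QP.
Qed.

Lemma Supp_specializations_Ass : Supp E = specializations (Ass E).
Proof.
rewrite [LHS]Supp_specializations; apply/seteqP; split=> P [Q XQ QP].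
  have [x xQ] := (SuppE Q).1 XQ.
  have [Q' [xQ' Q'Q Q'min]] := minimal_prime_below xQ.
  by exists Q'; [exists x|move=> r /Q'Q /QP].
by exists Q => //; case: XQ => x [xQ _]; apply/SuppE; exists x.
Qed.

Lemma Supp_Vset_ann P : Supp E P -> Vset (ann_mod E) P.
Proof. by move=> /SuppE [x xP] a ax; apply: xP. Qed.

Lemma radical_ann_OR a : radical (ann_mod E) a -> OR E a.
Proof. by move=> [n an] x; exists n. Qed.

Lemma common_annihilator (S : set R) (gens : seq E) :
  S 1 -> (forall s t, S s -> S t -> S (s * t)) ->
  (forall g, g \in gens -> exists2 s, S s & s *: g = 0) ->
  exists2 s, S s & forall g, g \in gens -> s *: g = 0.
Proof.
move=> S1 SM; elim: gens => [|g gens IH] gensS; first by exists 1.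
have [s Ss sgens] := IH (fun g' g'gens => gensS g' (mem_behead (s := g :: gens) g'gens)).
have [t St tg] := gensS g (mem_head _ _).
exists (t * s); first exact: SM.
move=> g'; rewrite inE => /predU1P [->|/sgens g's].
  by rewrite mulrC -scalerA tg scaler0.
by rewrite -scalerA g's scaler0.
Qed.

Lemma afg_ann_gens : afg E ->
  exists gens : seq E, forall t, (forall g, g \in gens -> t *: g = 0) -> ann_mod E t.
Proof.
move=> [S [f [act [[actD _ actM _ actf] [gens gensP]]]]].
have act0 s : act s 0 = 0.
  by apply: (addrI (act s 0)); rewrite -actD !addr0.
exists gens => t tgens x; have [c ->] := gensP x.
rewrite scaler_sumr big1 // => i _.
by rewrite -actf -actM mulrC actM actf tgens ?act0 // mem_nth.
Qed.

Lemma Supp_afg P : afg E -> Supp E P <-> Vset (ann_mod E) P.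
Proof.
move=> /afg_ann_gens [gens gensE]; split; first exact: Supp_Vset_ann.
move=> VP; apply: contrapT => /contrapT loc.
have [|s t|g _|t nPt tgens] := common_annihilator (S := ~` sval P) (gens := gens).
- exact: prime_ideal_not1 (proj2_sig P).
- exact: (prime_idealNM (proj2_sig P)).
- by have [t [nPt tg]] := loc g; exists t.
by apply: nPt; apply: VP; apply: gensE.
Qed.

Lemma OR_afg a : afg E -> OR E a <-> radical (ann_mod E) a.
Proof.
move=> /afg_ann_gens [gens gensE]; split; last exact: radical_ann_OR.
move=> aE.
have [|s t [m ->] [n ->]|g _|s [n ->] angens] :=
  common_annihilator (S := fun s => exists n, s = a ^+ n) (gens := gens).
- by exists 0%N.
- by exists (m + n)%N; rewrite exprD.
- by have [n an] := aE g; exists (a ^+ n) => //; exists n.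
by exists n; apply: gensE.
Qed.

End Support.

Section FiniteLength.
Variables (R : comPzRingType) (E : lmodType R).

Definition lspan (s : seq E) : set E :=
  fun x => exists c : nat -> R, x = \sum_(i < size s) c i *: s`_i.

Lemma lspan_submodule s : submodule (lspan s).
Proof.
split.
- by exists (fun _ => 0); rewrite big1 // => i _; rewrite scale0r.
- move=> _ _ [c1 ->] [c2 ->]; exists (fun i => c1 i + c2 i).
  by rewrite -big_split; apply: eq_bigr => i _; rewrite scalerDl.
- move=> r _ [c ->]; exists (fun i => r * c i).
  by rewrite scaler_sumr; apply: eq_bigr => i _; rewrite scalerA.
Qed.

Lemma lspan_rcons s y : lspan s `<=` lspan (rcons s y).
Proof.
move=> _ [c ->]; exists (fun i => if (i < size s)%N then c i else 0).
rewrite size_rcons big_ord_recr /= ltnn scale0r addr0.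
by apply: eq_bigr => i _; rewrite ltn_ord nth_rcons ltn_ord.
Qed.

Lemma lspan_rcons_last s y : lspan (rcons s y) y.
Proof.
exists (fun i => if i == size s then 1 else 0).
rewrite size_rcons big_ord_recr /= eqxx nth_rcons ltnn eqxx scale1r big1 ?add0r //.
by move=> i _; rewrite (ltn_eqF (ltn_ord i)) scale0r.
Qed.

Lemma finite_length_lspan : finite_length E -> exists s, forall x, lspan s x.
Proof.
move=> [n chain_bound]; apply: contrapT => nfg.
have grow s : exists x, ~ lspan s x.
  apply: contrapT => nx; apply: nfg; exists s => x.
  by apply: contrapT => sx; apply: nx; exists x.
have free k : exists2 s : seq E,
    size s = k & forall i, (i < k)%N -> ~ lspan (take i s) s`_i.
  elim: k => [|k [s <- sfree]]; first by exists [::].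
  have [x nsx] := grow s; exists (rcons s x); first by rewrite size_rcons.
  move=> i; rewrite -cats1 ltnS leq_eqVlt => /predU1P [->|ilt].
    by rewrite take_size_cat // nth_cat ltnn subnn.
  by rewrite (takel_cat _ (ltnW ilt)) nth_cat ilt; apply: sfree.
have [s sz sfree] := free n.+1.
suff : (n.+1 <= n)%N by rewrite ltnn.
apply: (chain_bound _ (fun i => lspan (take i s))) => [i|i ilt].
  exact: lspan_submodule.
rewrite (take_nth 0) ?sz //; split; first exact: lspan_rcons.
by exists s`_i; split; [exact: lspan_rcons_last|exact: sfree].
Qed.

Lemma finite_length_afg : finite_length E -> afg E.
Proof.
move=> /finite_length_lspan [gens gensE].
exists R, idfun, (fun r (x : E) => r *: x); split.
  split=> [r x y|r t x|r t x|x|//]; by rewrite ?scalerDr ?scalerDl ?scalerA ?scale1r.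
by exists gens.
Qed.

End FiniteLength.

Theorem proposition2p11 (R : comPzRingType) (E : lmodType R) :
  (zariski_closed (Supp E) <-> pro_constructible (Supp E)) /\
  (finite_set (Supp E) -> zariski_closed (Supp E)) /\
  (flat_compact (Ass E) -> zariski_closed (Supp E)) /\
  (pro_constructible (Ass E) -> zariski_closed (Supp E)) /\
  (finite_set (Ass E) -> zariski_closed (Supp E)) /\
  (flat_closed (Ass E) -> zariski_closed (Supp E)) /\
  (finite_length E -> zariski_closed (Supp E)) /\
  (afg E ->
     zariski_closed (Supp E) /\
     (forall P, Vset (OR E) P <-> Supp E P) /\
     (forall P, Supp E P <-> Vset (ann_mod E) P) /\
     (forall a, OR E a <-> radical (ann_mod E) a)).
Proof.
have SuppC X : closure_in_specializations X -> Supp E = specializations X ->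
    zariski_closed (Supp E).
  by move=> Xcl ->; exact: zariski_closed_specializations.
have SuppCS := SuppC _ ^~ (Supp_specializations E).
have SuppCA := SuppC _ ^~ (Supp_specializations_Ass E).
have afg_Supp : afg E ->
     zariski_closed (Supp E) /\
     (forall P, Vset (OR E) P <-> Supp E P) /\
     (forall P, Supp E P <-> Vset (ann_mod E) P) /\
     (forall a, OR E a <-> radical (ann_mod E) a).
  move=> afgE; split; first by exists (ann_mod E) => P; exact: Supp_afg.
  split; last by split=> [P|a]; [exact: Supp_afg|exact: OR_afg].
  move=> P; rewrite (Supp_afg _ afgE) -(Vset_radical (ann_mod E)).
  by split=> VP a Ha; apply: VP; [exact: (radical_ann_OR Ha)|exact/(OR_afg _ afgE)].
split.
  split; first exact: zariski_closed_pro_constructible.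
  by move=> /pro_constructible_closure; exact: SuppCS.
split; first by move=> /finite_set_flat_compact /flat_compact_closure; exact: SuppCS.
split; first by move=> /flat_compact_closure; exact: SuppCA.
split; first by move=> /pro_constructible_closure; exact: SuppCA.
split; first by move=> /finite_set_flat_compact /flat_compact_closure; exact: SuppCA.
split; first by move=> /flat_closed_compact /flat_compact_closure; exact: SuppCA.
split; first by move=> /finite_length_afg /afg_Supp [].
exact: afg_Supp.
Qed.
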